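(* Let $(S,\mathcal F,\mathcal L)$ be a $p$-local finite group with $S$ abelian. Then $(S,\mathcal F,\mathcal L)$ is nilpotent if and only if one of the following two conditions is satisfied: (1) two elements $a,b\in S$ are $\mathcal F$-conjugate if and only if they are equal; (2) $\mathrm{Aut}_{\mathcal F}(S)$ is the trivial group.
   Context: Elements $a,b\in S$ are $\mathcal F$-conjugate if there is $\phi\in\mathrm{Hom}_{\mathcal F}(\langle a\rangle,S)$ with $\phi(a)=b$. Let $p$ be a prime and $S$ a finite $p$-group. For $P,Q\le S$, $\mathrm{Hom}_S(P,Q)$ is the set of maps $c_g\colon x\mapsto gxg^{-1}$ with $g\in S$, $gPg^{-1}\le Q$, and $\mathrm{Aut}_S(P)=\mathrm{Hom}_S(P,P)$. A fusion system $\mathcal F$ over $S$ is a category whose objects are the subgroups of $S$, with $\mathrm{Hom}_S(P,Q)\subseteq\mathrm{Hom}_{\mathcal F}(P,Q)\subseteq \mathrm{Inj}(P,Q)$, such that every morphism factors as an $\mathcal F$-isomorphism followed by an inclusion. Subgroups are $\mathcal F$-conjugate if they are isomorphic in $\mathcal F$. $P$ is fully centralized (resp. fully normalized) if $|C_S(P)|\ge |C_S(P')|$ (resp. $|N_S(P)|\ge|N_S(P')|$) for all $P'$ $\mathcal F$-conjugate to $P$. $\mathcal F$ is saturated if (I) every fully normalized $P$ is fully centralized and $\mathrm{Aut}_S(P)$ is a Sylow $p$-subgroup of $\mathrm{Aut}_{\mathcal F}(P)$, and (II) whenever $\phi\in\mathrm{Hom}_{\mathcal F}(P,S)$ with $\phi(P)$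 fully centralized, $\phi$ extends to a morphism in $\mathcal F$ defined on $N_\phi=\{g\in N_S(P):\phi c_g\phi^{-1}\in \mathrm{Aut}_S(\phi(P))\}$. $P$ is $\mathcal F$-centric if $C_S(P')\le P'$ for all $P'$ $\mathcal F$-conjugate to $P$; $\mathcal F^c$ is the full subcategory on these. A centric linking system associated to $\mathcal F$ is a category $\mathcal L$ with objects the $\mathcal F$-centric subgroups, a functor $\pi\colon\mathcal L\to\mathcal F^c$ which is the identity on objects, and monomorphisms $\delta_P\colon P\to\mathrm{Aut}_{\mathcal L}(P)$, such that (A) $Z(P)$ (via $\delta_P$) acts freely on $\mathrm{Mor}_{\mathcal L}(P,Q)$ by composition and $\pi$ induces a bijection $\mathrm{Mor}_{\mathcal L}(P,Q)/Z(P)\to\mathrm{Hom}_{\mathcal F}(P,Q)$; (B) $\pi(\delta_P(g))=c_g$ for $g\in P$; (C) $f\circ\delta_P(g)=\delta_Q(\pi(f)(g))\circ f$ for $f\in\mathrm{Mor}_{\mathcal L}(P,Q)$, $g\in P$. A $p$-local finite group is a triple $(S,\mathcal F,\mathcal L)$ with $\mathcal F$ a saturated fusion system over $S$ and $\mathcal L$ an associated centric linking system. $(S,\mathcal F,\mathcal L)$ is called nilpotent if $\mathcal F=\mathcal F_S(S)$, the fusion system with $\mathrm{Hom}_{\mathcal F_S(S)}(P,Q)=\mathrm{Hom}_S(P,Q)$. *)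

From HB Require Import structures.
From mathcomp Require Import all_boot all_fingroup all_solvable.
From mathcomp Require Import boolp.
Set Implicit Arguments.
Unset Strict Implicit.
Unset Printing Implicit Defensive.
Import GroupScope.

(* A fusion system is encoded as a predicate
   F P Q phi : "phi (a map gT -> gT, only its values on P matter) is a
   morphism P -> Q of the category F", for subgroups P, Q of S. *)

Section Fusion.
Variable gT : finGroupType.
Implicit Types P Q R : {group gT}.

Definition cg (g x : gT) : gT := g * x * g^-1.

Definition injhom (P Q : {set gT}) (phi : gT -> gT) : Prop :=
  {in P &, {morph phi : x y / x * y}} /\ {in P &, injective phi} /\
  phi @: P \subset Q.

Definition HomS (S P Q : {set gT}) (phi : gT -> gT) : Prop :=
  exists2 g, g \in S & cg g @: P \subset Q /\ {in P, phi =1 cg g}.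

Definition fusion_system (S : {group gT})
    (F : {group gT} -> {group gT} -> (gT -> gT) -> Prop) : Prop :=
  [/\
      forall P Q phi psi, F P Q phi -> {in P, phi =1 psi} -> F P Q psi,
      forall P Q phi, P \subset S -> Q \subset S -> HomS S P Q phi -> F P Q phi,
      forall P Q phi, P \subset S -> Q \subset S -> F P Q phi -> injhom P Q phi,
      forall P Q R phi psi, P \subset S -> Q \subset S -> R \subset S ->
        F P Q phi -> F Q R psi -> F P R (psi \o phi)
    &
      forall P Q phi, P \subset S -> Q \subset S -> F P Q phi ->
        exists P' : {group gT}, [/\ P' \subset Q, F P P' phi &
          exists2 psi, F P' P psi &
            {in P, forall x, psi (phi x) = x} /\ {in P', forall y, phi (psi y) = y}]].

Variable S : {group gT}.
Variable F : {group gT} -> {group gT} -> (gT -> gT) -> Prop.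

Definition Fconj_sub P P' : Prop :=
  exists phi psi, [/\ F P P' phi, F P' P psi,
     {in P, forall x, psi (phi x) = x} & {in P', forall y, phi (psi y) = y}].

Definition Fconj_elt (a b : gT) : Prop :=
  exists2 phi, F <[a]>%G S phi & phi a = b.

Definition fully_centralized P : Prop :=
  forall P' : {group gT}, P' \subset S -> Fconj_sub P P' ->
    #|'C_S(P')| <= #|'C_S(P)|.

Definition fully_normalized P : Prop :=
  forall P' : {group gT}, P' \subset S -> Fconj_sub P P' ->
    #|'N_S(P')| <= #|'N_S(P)|.

(* Aut_F(P), as a set of automorphisms of P (permutations of gT fixing
   everything outside P) *)
Definition AutF P : {set {perm gT}} :=
  [set a in Aut P | `[< F P P (fun x => a x) >]].

Definition AutS P : {set {perm gT}} :=
  [set a in Aut P | `[< exists2 g, g \in 'N_S(P) & {in P, (fun x => a x) =1 cg g} >]].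

(* N_phi, for phi : P -> P' = phi(P) *)
Definition Nphi P P' (phi : gT -> gT) : {set gT} :=
  [set g in 'N_S(P) | `[< exists2 h, h \in 'N_S(P') &
       {in P, forall x, phi (cg g x) = cg h (phi x)} >]].

Definition saturated (p : nat) : Prop :=
  (forall P, P \subset S -> fully_normalized P ->
     fully_centralized P /\ p.-Sylow(AutF P) (AutS P))
  /\
  (forall P P' (phi : gT -> gT), P \subset S -> P' \subset S ->
     F P S phi -> phi @: P = P' -> fully_centralized P' ->
     forall N : {group gT}, N :=: Nphi P P' phi ->
       exists2 psi, F N S psi & {in P, psi =1 phi}).

Definition Fcentric P : Prop :=
  P \subset S /\
  forall P' : {group gT}, P' \subset S -> Fconj_sub P P' -> 'C_S(P') \subset P'.

Definition nilpotent_fusion : Prop :=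
  forall P Q phi, P \subset S -> Q \subset S -> (F P Q phi <-> HomS S P Q phi).

End Fusion.

Record centric_linking_system (gT : finGroupType) (S : {group gT})
    (F : {group gT} -> {group gT} -> (gT -> gT) -> Prop) := CLS {
  Mor : {group gT} -> {group gT} -> Type;
  comp : forall P Q R : {group gT}, Mor Q R -> Mor P Q -> Mor P R;
  idm : forall P : {group gT}, Mor P P;
  pi : forall P Q : {group gT}, Mor P Q -> gT -> gT;
  delta : forall P : {group gT}, gT -> Mor P P;
  (* category axioms on the objects = F-centric subgroups *)
  comp_assoc : forall (P Q R T : {group gT}) (f : Mor P Q) (g : Mor Q R) (h : Mor R T),
    Fcentric S F P -> Fcentric S F Q -> Fcentric S F R -> Fcentric S F T ->
    comp h (comp g f) = comp (comp h g) f;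
  comp_id_l : forall (P Q : {group gT}) (f : Mor P Q),
    Fcentric S F P -> Fcentric S F Q -> comp (idm Q) f = f;
  comp_id_r : forall (P Q : {group gT}) (f : Mor P Q),
    Fcentric S F P -> Fcentric S F Q -> comp f (idm P) = f;
  pi_mor : forall (P Q : {group gT}) (f : Mor P Q),
    Fcentric S F P -> Fcentric S F Q -> F P Q (pi f);
  pi_comp : forall (P Q R : {group gT}) (f : Mor P Q) (g : Mor Q R),
    Fcentric S F P -> Fcentric S F Q -> Fcentric S F R ->
    {in P, pi (comp g f) =1 pi g \o pi f};
  pi_id : forall P : {group gT}, Fcentric S F P -> {in P, pi (idm P) =1 id};
  delta1 : forall P : {group gT}, Fcentric S F P -> delta P 1 = idm P;
  deltaM : forall P : {group gT}, Fcentric S F P ->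
    {in P &, forall x y, delta P (x * y) = comp (delta P x) (delta P y)};
  delta_inj : forall P : {group gT}, Fcentric S F P -> {in P &, injective (delta P)};
  axA_free : forall (P Q : {group gT}) (f : Mor P Q), Fcentric S F P -> Fcentric S F Q ->
    forall z, z \in 'Z(P) -> comp f (delta P z) = f -> z = 1;
  axA_fibres : forall (P Q : {group gT}) (f f' : Mor P Q), Fcentric S F P -> Fcentric S F Q ->
    ({in P, pi f =1 pi f'} <-> exists2 z, z \in 'Z(P) & f' = comp f (delta P z));
  axA_surj : forall (P Q : {group gT}) (phi : gT -> gT), Fcentric S F P -> Fcentric S F Q ->
    F P Q phi -> exists f : Mor P Q, {in P, pi f =1 phi};
  axB : forall P : {group gT}, Fcentric S F P ->
    forall g, g \in P -> {in P, pi (delta P g) =1 cg g};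
  axC : forall (P Q : {group gT}) (f : Mor P Q), Fcentric S F P -> Fcentric S F Q ->
    forall g, g \in P -> comp f (delta P g) = comp (delta Q (pi f g)) f
}.

(* Since S is abelian, every conjugation map c_g with g in S is the identity,
   so F = F_S(S) exactly when every morphism of F is the identity on its
   source.  Condition (1) gives this directly: phi(x) is F-conjugate to x.
   Under condition (2), saturation axiom (II) extends any phi : P -> S to
   S = N_phi (every subgroup of S is fully centralized), and the extension
   is an element of Aut_F(S) = 1. *)

From mathcomp Require Import all_boot all_fingroup all_solvable.
From mathcomp Require Import boolp.
Set Implicit Arguments.
Unset Strict Implicit.
Unset Printing Implicit Defensive.
Import GroupScope.

Lemma cg_comm (gT : finGroupType) (g x : gT) : commute g x -> cg g x = x.
Proof. by rewrite /cg => ->; rewrite mulgK. Qed.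

Lemma HomS_id (gT : finGroupType) (S P Q : {group gT}) (phi : gT -> gT) :
  P \subset Q -> {in P, phi =1 id} -> HomS S P Q phi.
Proof.
move=> sPQ phi_id; exists 1; first exact: group1.
have cg1 x : cg 1 x = x by apply/cg_comm/commute_sym/commute1.
split=> [|x xP]; last by rewrite phi_id // cg1.
by apply/subsetP=> _ /imsetP[x xP ->]; rewrite cg1 (subsetP sPQ).
Qed.

Section AbelianFusion.

Variables (gT : finGroupType) (S : {group gT}).
Variable F : {group gT} -> {group gT} -> (gT -> gT) -> Prop.
Hypotheses (fusF : fusion_system S F) (abS : abelian S).
Implicit Types (P Q R : {group gT}) (phi psi : gT -> gT).

Lemma HomS_abelian_id P Q phi :
  P \subset S -> HomS S P Q phi -> {in P, phi =1 id}.
Proof.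
move=> sPS [g gS [_ phi_cg]] x xP; rewrite phi_cg //.
exact/cg_comm/(centsP abS)/(subsetP sPS).
Qed.

Lemma fusion_incl P Q : P \subset Q -> Q \subset S -> F P Q id.
Proof.
have [_ FS _ _ _] := fusF => sPQ sQS.
by apply: FS (subset_trans sPQ sQS) sQS _; apply: HomS_id.
Qed.

Lemma fusion_restr P Q R phi :
  R \subset P -> P \subset S -> Q \subset S -> F P Q phi -> F R S phi.
Proof.
have [_ _ _ FC _] := fusF => sRP sPS sQS Fphi.
have sRS := subset_trans sRP sPS.
have FRQ := FC _ _ _ _ _ sRS sPS sQS (fusion_incl sRP sPS) Fphi.
exact: FC _ _ _ _ _ sRS sQS (subxx S) FRQ (fusion_incl sQS (subxx S)).
Qed.

Lemma fusion_mem P Q phi x :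
  P \subset S -> Q \subset S -> F P Q phi -> x \in P -> phi x \in Q.
Proof.
have [_ _ FI _ _] := fusF => sPS sQS Fphi xP.
have [_ [_ sImQ]] := FI _ _ _ sPS sQS Fphi.
by rewrite (subsetP sImQ) ?imset_f.
Qed.

Lemma nilpotent_fusion_abelianP :
  nilpotent_fusion S F <->
  (forall P Q phi, P \subset S -> Q \subset S -> F P Q phi -> {in P, phi =1 id}).
Proof.
split=> [nilF P Q phi sPS sQS Fphi | fixF P Q phi sPS sQS].
  exact: HomS_abelian_id sPS ((nilF P Q phi sPS sQS).1 Fphi).
have [_ FS _ _ _] := fusF.
split=> [Fphi | ]; last exact: FS.
apply: HomS_id (fixF P Q phi sPS sQS Fphi).
by apply/subsetP=> x xP; rewrite -(fixF P Q phi sPS sQS Fphi x xP) (fusion_mem sPS).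
Qed.

Lemma Fconj_elt_refl a : a \in S -> Fconj_elt S F a a.
Proof. by move=> aS; exists id => //; apply: fusion_incl; rewrite ?cycle_subG. Qed.

Lemma Fconj_elt_morph P Q phi x :
  P \subset S -> Q \subset S -> F P Q phi -> x \in P -> Fconj_elt S F x (phi x).
Proof.
move=> sPS sQS Fphi xP; exists phi => //.
by apply: fusion_restr sPS sQS Fphi; rewrite cycle_subG.
Qed.

Lemma fully_centralized_abelian P : P \subset S -> fully_centralized S F P.
Proof.
move=> sPS P' _ _; rewrite (setIidPl (subset_trans abS (centS sPS))).
exact/subset_leq_card/subsetIl.
Qed.

Lemma Nphi_abelian P P' phi : P \subset S -> Nphi S P P' phi = S.
Proof.
move=> sPS; apply/setP=> g; rewrite inE.
case gS: (g \in S); last by rewrite inE gS.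
have cSg x : x \in S -> commute g x by move=> xS; apply: (centsP abS).
rewrite inE gS (subsetP (sub_abelian_norm abS sPS)) //=.
apply/asboolP; exists 1; first exact: group1.
move=> x xP; rewrite !cg_comm //; first exact/commute_sym/commute1.
exact/cSg/(subsetP sPS).
Qed.

Lemma fusion_image P phi :
  P \subset S -> F P S phi -> exists2 P' : {group gT}, P' \subset S & phi @: P = P'.
Proof.
have [_ _ FI _ FF] := fusF => sPS Fphi.
have [P' [sP'S FPP' [psi Fpsi [_ phiK]]]] := FF _ _ _ sPS (subxx S) Fphi.
exists P' => //; apply/eqP; rewrite eqEsubset.
have [_ [_ ->]] := FI _ _ _ sPS sP'S FPP'.
apply/subsetP=> y yP'; rewrite -(phiK y yP') imset_f //.
exact: fusion_mem sP'S sPS Fpsi yP'.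
Qed.

Lemma fusion_extend_abelian p P phi :
  saturated S F p -> P \subset S -> F P S phi ->
  exists2 psi, F S S psi & {in P, psi =1 phi}.
Proof.
move=> [_ satII] sPS Fphi.
have [P' sP'S imP'] := fusion_image sPS Fphi.
apply: (satII _ _ _ sPS sP'S Fphi imP' (fully_centralized_abelian sP'S) S).
by rewrite Nphi_abelian.
Qed.

Lemma AutF_of_endo psi :
  F S S psi -> exists2 a, a \in AutF F S & {in S, a =1 psi}.
Proof.
have [FE _ FI _ _] := fusF => Fpsi.
have [psiM [psi_inj _]] := FI _ _ _ (subxx S) (subxx S) Fpsi.
pose f x := if x \in S then psi x else x.
have psiS x : x \in S -> psi x \in S by apply: fusion_mem.
have f_inj : injective f.
  move=> x y; rewrite /f.
  case xS: (x \in S); case yS: (y \in S) => // E; first exact: psi_inj.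
  - by move: (psiS x xS); rewrite E yS.
  - by move: (psiS y yS); rewrite -E xS.
have aE x : x \in S -> perm f_inj x = psi x by move=> xS; rewrite permE /f xS.
exists (perm f_inj) => //.
have aAut : perm f_inj \in Aut S.
  rewrite inE; apply/andP; split.
    by apply/subsetP=> x; rewrite inE permE /f; case: ifP; rewrite ?eqxx.
  by apply/morphicP=> x y xS yS; rewrite !aE ?groupM // psiM.
by rewrite inE aAut; apply/asboolP; apply: FE Fpsi _ => x xS; rewrite aE.
Qed.

End AbelianFusion.

Theorem corollary4p9 (gT : finGroupType) (p : nat) (S : {group gT})
    (F : {group gT} -> {group gT} -> (gT -> gT) -> Prop)
    (L : centric_linking_system S F) :
  prime p -> p.-group S -> fusion_system S F -> saturated S F p ->
  abelian S ->
  (nilpotent_fusion S F <->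
     ((forall a b, a \in S -> b \in S -> (Fconj_elt S F a b <-> a = b))
      \/ AutF F S = 1)).
Proof.
move=> _ _ fusF satF abS; rewrite nilpotent_fusion_abelianP //.
split=> [fixF | [conjF | autF1] P Q phi sPS sQS Fphi x xP].
- left=> a b aS bS; split=> [[phi Fphi <-] | <-]; last exact: Fconj_elt_refl.
  by rewrite (fixF _ _ _ _ (subxx S) Fphi) ?cycle_id ?cycle_subG.
- have xS := subsetP sPS x xP.
  have phixS := subsetP sQS _ (fusion_mem fusF sPS sQS Fphi xP).
  by symmetry; apply/(conjF x (phi x) xS phixS)/(Fconj_elt_morph fusF sPS sQS).
- have FPS := fusion_restr fusF (subxx P) sPS sQS Fphi.
  have [psi Fpsi psiE] := fusion_extend_abelian fusF abS satF sPS FPS.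
  have [a aF aE] := AutF_of_endo fusF Fpsi.
  move: aF; rewrite autF1 => /set1P a1.
  by rewrite -psiE // -aE ?(subsetP sPS) // a1 perm1.
Qed.
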